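(* Let $G$ be a finite simple graph. Then the independence complex $\Delta(G)$ is sortable if and only if $G$ is a proper interval graph.
   Context: The independence complex $\Delta(G)$ is the simplicial complex of all independent sets of $G$. For finite $F,G\subset\mathbb{N}$ with $|F|=r,|G|=s$, write $\mathbf{x}^F\mathbf{x}^G=x_{i_1}\cdots x_{i_{r+s}}$ with $i_1\le\cdots\le i_{r+s}$ (where $\mathbf{x}^F=\prod_{i\in F}x_i$) and set $\mathrm{sort}(F,G)=(\{i_k:k\text{ odd}\},\{i_k:k\text{ even}\})$. A simplicial complex $\Delta$ with $V(\Delta)\subset\mathbb{N}$ is sortable with respect to the given labeling if $\mathrm{sort}(F,G)\in\Delta\times\Delta$ for all $F,G\in\Delta$; $\Delta$ is sortable if it is sortable with respect to some labeling of its vertices by distinct integers. A proper interval graph is a graph whose vertices can be assigned real intervals, none properly containing another, such that two vertices are adjacent iff their intervals intersect. *)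

From mathcomp Require Import all_boot.
From Stdlib Require Import Rdefinitions.

Set Implicit Arguments.
Unset Strict Implicit.
Unset Printing Implicit Defensive.

(* A finite simple graph is a symmetric irreflexive relation e on a finType V. *)

Definition independent (V : finType) (e : rel V) (F : {set V}) : bool :=
  [forall u in F, forall v in F, ~~ e u v].

(* For a labeling f of the vertices by naturals, the sorted sequence
   i_1 <= ... <= i_{r+s} of the monomial x^F x^G (labels of F and of G,
   with repetition). *)
Definition merged_labels (V : finType) (f : V -> nat) (F G : {set V}) : seq nat :=
  sort leq (map f (enum F) ++ map f (enum G)).

(* Labels at odd (1-indexed) positions, i.e. even 0-indexed positions. *)
Definition odd_part (s : seq nat) : seq nat :=
  [seq nth 0 s i | i <- iota 0 (size s) & ~~ odd i].
(* Labels at even (1-indexed) positions. *)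
Definition even_part (s : seq nat) : seq nat :=
  [seq nth 0 s i | i <- iota 0 (size s) & odd i].

(* sort(F,G) = (sort1, sort2), pulled back along the labeling f as vertex sets. *)
Definition sort1 (V : finType) (f : V -> nat) (F G : {set V}) : {set V} :=
  [set v | f v \in odd_part (merged_labels f F G)].
Definition sort2 (V : finType) (f : V -> nat) (F G : {set V}) : {set V} :=
  [set v | f v \in even_part (merged_labels f F G)].

Definition sortable_wrt (V : finType) (e : rel V) (f : V -> nat) : Prop :=
  forall F G : {set V}, independent e F -> independent e G ->
    independent e (sort1 f F G) /\ independent e (sort2 f F G).

Definition ind_complex_sortable (V : finType) (e : rel V) : Prop :=
  exists f : V -> nat, injective f /\ sortable_wrt e f.

Definition proper_interval_graph (V : finType) (e : rel V) : Prop :=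
  exists l r : V -> R,
    (forall v, Rle (l v) (r v)) /\
    (forall u v : V, u <> v ->
        ~ (Rle (l v) (l u) /\ Rle (r u) (r v) /\ (l u <> l v \/ r u <> r v))) /\
    (forall u v : V, u <> v ->
        (e u v <-> (Rle (l u) (r v) /\ Rle (l v) (r u)))).

(* The bridge between the two sides is the umbrella property of a labeling f
   of the vertices:  f x < f y < f z  and  x ~ z  imply  x ~ y  and  y ~ z.

   1. For an injective labeling, Delta(G) is sortable w.r.t. f iff f has the
      umbrella property.  If some x < y < z violates it, say x,y are not
      adjacent, then sort({x,y},{z}) = ({x,z},{y}) and {x,z} is not independent.
      Conversely, two entries at positions p < q of the same parity in the
      merged sorted label sequence enclose a third one; under the umbrella
      property the labels between two adjacent vertices span a clique, and an
      independent set meets a clique at most once, so the two faces can only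
      contribute two entries there: hence same-parity entries are non-adjacent.
   2. An umbrella labeling yields interval [N f v, N reach(v) + f v], where
      reach(v) is the largest label of v or of a later neighbour of v.
   3. A proper interval model yields an umbrella labeling: rank the vertices by
      their left endpoints (ties broken by enum_rank). *)

From Stdlib Require Import Rdefinitions RIneq Lra.
From mathcomp Require Import all_boot zify.

Set Implicit Arguments.
Unset Strict Implicit.
Unset Printing Implicit Defensive.

Definition umbrella (V : finType) (e : rel V) (f : V -> nat) : Prop :=
  forall x y z, f x < f y -> f y < f z -> e x z -> e x y && e y z.

Lemma independentP (V : finType) (e : rel V) (F : {set V}) :
  reflect (forall x y, x \in F -> y \in F -> ~~ e x y) (independent e F).
Proof.
apply: (iffP forall_inP) => [H x y xF yF | H x xF].
- by have /forall_inP := H x xF; apply.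
- by apply/forall_inP => y yF; apply: H.
Qed.

Lemma independent_clique_count (V : finType) (e : rel V) (F : {set V}) (P : pred V) :
  independent e F -> (forall x y, P x -> P y -> x != y -> e x y) ->
  count P (enum F) <= 1.
Proof.
move=> /independentP iF P_clique; rewrite -size_filter.
have : uniq (filter P (enum F)) by rewrite filter_uniq ?enum_uniq.
have : forall x, x \in filter P (enum F) -> (x \in F) && P x.
  by move=> x; rewrite mem_filter mem_enum andbC.
case: (filter P (enum F)) => [|x [|y t]] //= memFP /andP[x_notin _].
have /andP[xF Px] := memFP x (mem_head _ _).
have /andP[yF Py] : (y \in F) && P y by apply: memFP; rewrite !inE eqxx orbT.
have nxy : x != y by apply: contra x_notin => /eqP ->; rewrite mem_head.
by have := iF x y xF yF; rewrite (P_clique x y Px Py nxy).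
Qed.

Lemma count_merged_labels (V : finType) (f : V -> nat) (F G : {set V}) (P : pred nat) :
  count P (merged_labels f F G) = count (preim f P) (enum F) + count (preim f P) (enum G).
Proof. by rewrite /merged_labels (permP (permEl (perm_sort _ _))) count_cat !count_map. Qed.

Lemma sorted_same_parity_count (s : seq nat) p q :
  sorted leq s -> p < q -> q < size s -> odd p = odd q ->
  3 <= count (fun x => nth 0 s p <= x <= nth 0 s q) s.
Proof.
move=> s_sorted lpq hq hpq; set P := (fun x => _).
have mono i j : i <= j -> j < size s -> nth 0 s i <= nth 0 s j.
  move=> hij hj; apply: (sorted_leq_nth leq_trans leqnn 0 s_sorted) => //.
  exact: leq_ltn_trans hij hj.
have lp1q : p.+1 < q.
  rewrite ltn_neqAle lpq andbT; apply/eqP => E.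
  by move: hpq; rewrite -E /=; case: (odd p).
rewrite -(cat_take_drop p s) count_cat.
rewrite (drop_nth 0 (ltn_trans lpq hq)) (drop_nth 0 (ltn_trans lp1q hq)) /=.
have P_p : P (nth 0 s p) by rewrite /P leqnn (mono p q) // ltnW.
have P_p1 : P (nth 0 s p.+1).
  by rewrite /P (mono p p.+1 (leqnSn p) (ltn_trans lp1q hq)) (mono p.+1 q (ltnW lp1q) hq).
have P_after : 0 < count P (drop p.+2 s).
  rewrite -has_count; apply/hasP; exists (nth 0 s q); last by rewrite /P leqnn andbT (mono p q) // ltnW.
  have -> : nth 0 s q = nth 0 (drop p.+2 s) (q - p.+2) by rewrite nth_drop subnKC.
  by apply: mem_nth; rewrite size_drop ltn_sub2r // (leq_ltn_trans lp1q hq).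
by rewrite P_p P_p1; lia.
Qed.

Lemma mem_filtered_nth (s : seq nat) (P : pred nat) n :
  n \in [seq nth 0 s i | i <- iota 0 (size s) & P i] ->
  exists2 i, (i < size s) && P i & nth 0 s i = n.
Proof.
case/mapP => i; rewrite mem_filter mem_iota add0n => /and3P[Pi _ hi] ->.
by exists i => //; rewrite hi Pi.
Qed.

Lemma perm_enum_set2 (T : finType) (a b : T) :
  a != b -> perm_eq (enum [set a; b]) [:: a; b].
Proof.
move=> nab; apply: uniq_perm; rewrite ?enum_uniq //= ?inE ?nab // => w.
by rewrite mem_enum !inE.
Qed.

Section SortableUmbrella.
Variables (V : finType) (e : rel V) (f : V -> nat).
Hypotheses (e_sym : symmetric e) (e_irr : irreflexive e).

Lemma independent_set1 (a : V) : independent e [set a].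
Proof. by apply/independentP => u v /set1P-> /set1P->; rewrite e_irr. Qed.

Lemma independent_set2 (a b : V) : ~~ e a b -> independent e [set a; b].
Proof.
move=> nab; apply/independentP => u v /set2P hu /set2P hv.
by case: hu => ->; case: hv => ->; rewrite ?e_irr // e_sym.
Qed.

(* Sortability forces the umbrella property: a violation x < y < z with x,z
   adjacent sorts the faces {x,y},{z} (or {y,z},{x}) into the face {x,z}. *)
Lemma sortable_umbrella : sortable_wrt e f -> umbrella e f.
Proof.
move=> f_sortable x y z lxy lyz exz.
have xz_not_face F G : independent e F -> independent e G ->
    perm_eq (map f (enum F) ++ map f (enum G)) [:: f x; f y; f z] -> False.
  move=> iF iG labels_FG.
  have merged : merged_labels f F G = [:: f x; f y; f z].
    rewrite /merged_labels (perm_sortP leq_total leq_trans anti_leq _ _ labels_FG).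
    by rewrite sorted_sort //=; [exact: leq_trans | rewrite (ltnW lxy) (ltnW lyz)].
  have [/independentP i1 _] := f_sortable F G iF iG.
  have xin : x \in sort1 f F G by rewrite inE merged /odd_part /= inE eqxx.
  have zin : z \in sort1 f F G by rewrite inE merged /odd_part /= !inE eqxx orbT.
  by have := i1 x z xin zin; rewrite exz.
have nxy : x != y by apply: contraTneq lxy => ->; rewrite ltnn.
have nyz : y != z by apply: contraTneq lyz => ->; rewrite ltnn.
apply/andP; split; apply/negPn/negP => ne.
- apply: (xz_not_face _ _ (independent_set2 ne) (independent_set1 z)).
  rewrite enum_set1 -[[:: f x; f y; f z]]/([:: f x; f y] ++ [:: f z]) perm_cat2r.
  exact: perm_map (perm_enum_set2 nxy).
- apply: (xz_not_face _ _ (independent_set2 ne) (independent_set1 x)).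
  rewrite enum_set1 perm_catC -[[:: f x; f y; f z]]/([:: f x] ++ [:: f y; f z]) perm_cat2l.
  exact: perm_map (perm_enum_set2 nyz).
Qed.

Hypothesis f_inj : injective f.
Hypothesis f_umbrella : umbrella e f.

Lemma umbrella_clique u v x y : e u v -> f u < f v ->
  f u <= f x <= f v -> f u <= f y <= f v -> x != y -> e x y.
Proof.
move=> euv luv /andP[hx1 hx2] /andP[hy1 hy2] nxy.
wlog lxy : x y hx1 hx2 hy1 hy2 nxy / f x < f y.
  move=> W; have : f x != f y by apply: contra nxy => /eqP /f_inj ->.
  rewrite neq_ltn => /orP[h|h]; first exact: W.
  by rewrite e_sym; apply: W; rewrite // eq_sym.
have e_to_v w : f u <= f w < f v -> e w v.
  case/andP=> huw hwv; have [/f_inj <- //|nuw] := eqVneq (f u) (f w).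
  have luw : f u < f w by rewrite ltn_neqAle nuw.
  by case/andP: (f_umbrella luw hwv euv).
have [/f_inj y_eq_v|nyv] := eqVneq (f y) (f v).
  by subst y; apply: e_to_v; rewrite hx1.
have lyv : f y < f v by rewrite ltn_neqAle nyv.
have exv : e x v by apply: e_to_v; rewrite hx1 (ltn_trans lxy).
by case/andP: (f_umbrella lxy lyv exv).
Qed.

Lemma same_parity_nonadjacent (F G : {set V}) u v p q :
  independent e F -> independent e G ->
  p < size (merged_labels f F G) -> q < size (merged_labels f F G) -> odd p = odd q ->
  nth 0 (merged_labels f F G) p = f u -> nth 0 (merged_labels f F G) q = f v ->
  f u < f v -> ~~ e u v.
Proof.
move=> iF iG hp hq hpq hsp hsq luv; apply/negP => euv.
have s_sorted : sorted leq (merged_labels f F G) by apply: sort_sorted; exact: leq_total.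
have lpq : p < q.
  rewrite ltnNge; apply/negP => hqp.
  by have := sorted_leq_nth leq_trans leqnn 0 s_sorted q p hq hp hqp; rewrite hsp hsq leqNgt luv.
have := sorted_same_parity_count s_sorted lpq hq hpq.
have between_clique : forall x y, preim f (fun w => f u <= w <= f v) x ->
    preim f (fun w => f u <= w <= f v) y -> x != y -> e x y.
  by move=> x y; apply: umbrella_clique.
rewrite hsp hsq count_merged_labels.
have := independent_clique_count iF between_clique.
have := independent_clique_count iG between_clique.
lia.
Qed.

(* Each half of sort(F,G) collects entries at positions of one parity,
   hence is a face. *)
Lemma umbrella_sortable : sortable_wrt e f.
Proof.
move=> F G iF iG; set s := merged_labels f F G.
have parity_class_indep (P : pred nat) : (forall i j, P i -> P j -> odd i = odd j) ->
    independent e [set v | f v \in [seq nth 0 s i | i <- iota 0 (size s) & P i]].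
  move=> P_parity; apply/independentP => x y.
  rewrite !inE => /mem_filtered_nth[i /andP[hi Pi] hx] /mem_filtered_nth[j /andP[hj Pj] hy].
  have [->|nxy] := eqVneq x y; first by rewrite e_irr.
  have pij := P_parity _ _ Pi Pj.
  have : f x != f y by apply: contra nxy => /eqP/f_inj ->.
  rewrite neq_ltn => /orP[lxy|lyx].
  - exact: same_parity_nonadjacent iF iG hi hj pij hx hy lxy.
  - by rewrite e_sym; exact: same_parity_nonadjacent iF iG hj hi (esym pij) hy hx lyx.
split.
- by apply: (parity_class_indep (fun i => ~~ odd i)) => i j; case: (odd i); case: (odd j).
- by apply: (parity_class_indep odd) => i j; case: (odd i); case: (odd j).
Qed.

End SortableUmbrella.

Lemma INR_leq (a b : nat) : Rle (INR a) (INR b) <-> a <= b.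
Proof. by split => [/INR_le/leP | /leP/le_INR]. Qed.

Section UmbrellaToInterval.
Variables (V : finType) (e : rel V) (f : V -> nat).
Hypotheses (e_sym : symmetric e) (f_inj : injective f) (f_umbrella : umbrella e f).

Definition label_bound : nat := (\max_(v : V) f v).+1.

Lemma label_lt_bound v : f v < label_bound.
Proof. by rewrite ltnS; apply: (leq_bigmax (F := f)). Qed.

Definition reach (v : V) : nat :=
  \max_(w | (w == v) || (e v w && (f v <= f w))) f w.

Lemma label_le_reach v : f v <= reach v.
Proof. by apply: (leq_bigmax_cond (F := f)); rewrite eqxx. Qed.

Lemma neighbour_le_reach v w : e v w -> f v <= f w -> f w <= reach v.
Proof. by move=> evw lvw; apply: (leq_bigmax_cond (F := f)); rewrite evw lvw orbT. Qed.

Lemma reach_attained v :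
  exists2 w, (w == v) || (e v w && (f v <= f w)) & reach v = f w.
Proof.
have [|w hw reach_w] := @eq_bigmax_cond _ [pred w | (w == v) || (e v w && (f v <= f w))] f.
  by apply/card_gt0P; exists v; rewrite inE /= eqxx.
by exists w.
Qed.

Lemma reach_mono u v : f u < f v -> reach u <= reach v.
Proof.
move=> luv; have [w /orP[/eqP ->|/andP[euw luw]] ->] := reach_attained u.
  exact: leq_trans (ltnW luv) (label_le_reach v).
have [lwv|lvw] := leqP (f w) (f v); first exact: leq_trans lwv (label_le_reach v).
have /andP[_ evw] := f_umbrella luv lvw euw.
exact: neighbour_le_reach evw (ltnW lvw).
Qed.

Lemma adjacent_iff_reached u v : f u < f v -> e u v = (f v <= reach u).
Proof.
move=> luv; apply/idP/idP => [euv|]; first exact: neighbour_le_reach euv (ltnW luv).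
have [w /orP[/eqP ->|/andP[euw luw]] ->] := reach_attained u; first by rewrite leqNgt luv.
move=> lvw; have [/f_inj -> //|nvw] := eqVneq (f v) (f w).
have lvw' : f v < f w by rewrite ltn_neqAle nvw lvw.
by case/andP: (f_umbrella luv lvw' euw).
Qed.

Lemma umbrella_interval_model : proper_interval_graph e.
Proof.
pose N := label_bound.
exists (fun v => INR (N * f v)), (fun v => INR (N * reach v + f v)).
split; [|split].
- by move=> v; apply/INR_leq; have := label_le_reach v; nia.
- move=> u v nuv [/INR_leq h1 [/INR_leq h2 _]].
  have := label_lt_bound u; have := label_lt_bound v.
  have : f u != f v by apply/eqP => /f_inj.
  rewrite neq_ltn => /orP[luv|lvu]; first nia.
  by have := reach_mono lvu; nia.
- have model_adj u v : f u < f v ->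
      (e u v <-> Rle (INR (N * f u)) (INR (N * reach v + f v)) /\
                 Rle (INR (N * f v)) (INR (N * reach u + f u))).
    move=> luv; rewrite !INR_leq adjacent_iff_reached //.
    have := label_lt_bound u; have := label_lt_bound v; have := label_le_reach v.
    by split => [h|[_ h]]; [split|]; nia.
  move=> u v nuv; have : f u != f v by apply/eqP => /f_inj.
  rewrite neq_ltn => /orP[luv|lvu]; first exact: model_adj.
  by rewrite e_sym model_adj //; tauto.
Qed.

End UmbrellaToInterval.

Section IntervalToUmbrella.
Variables (V : finType) (l r : V -> R).

Definition Rltb (a b : R) : bool := if Rlt_dec a b then true else false.

Lemma RltbP a b : reflect (Rlt a b) (Rltb a b).
Proof. by rewrite /Rltb; case: Rlt_dec => h; constructor. Qed.

Definition left_before (w v : V) : bool :=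
  Rltb (l w) (l v) || (~~ Rltb (l v) (l w) && (enum_rank w < enum_rank v)).

Lemma left_before_trans a b c : left_before a b -> left_before b c -> left_before a c.
Proof.
rewrite /left_before => /orP[/RltbP h1|/andP[/RltbP h1 h1']] /orP[/RltbP h2|/andP[/RltbP h2 h2']].
- by apply/orP; left; apply/RltbP; lra.
- by apply/orP; left; apply/RltbP; lra.
- by apply/orP; left; apply/RltbP; lra.
- apply/orP; right; apply/andP; split; first by apply/RltbP; lra.
  exact: ltn_trans h1' h2'.
Qed.

Lemma left_before_irr a : ~~ left_before a a.
Proof. by rewrite /left_before ltnn andbF orbF; apply/RltbP; lra. Qed.

Lemma left_before_total a b : a != b -> left_before a b || left_before b a.
Proof.
move=> nab; rewrite /left_before.
case: (RltbP (l a) (l b)) => //= _; case: (RltbP (l b) (l a)) => //= _.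
by rewrite -neq_ltn; apply: contra nab => /eqP/val_inj/enum_rank_inj ->.
Qed.

Definition left_rank (v : V) : nat := #|[set w | left_before w v]|.

Lemma left_rank_lt a b : left_before a b -> left_rank a < left_rank b.
Proof.
move=> hab; apply: proper_card; apply/properP; split.
  by apply/subsetP => x; rewrite !inE => h; apply: left_before_trans h hab.
by exists a; rewrite !inE // left_before_irr.
Qed.

Lemma left_rank_inj : injective left_rank.
Proof.
move=> a b E; apply/eqP; apply/negPn/negP => nab.
by case/orP: (left_before_total nab) => /left_rank_lt; rewrite E ltnn.
Qed.

Lemma left_rank_left_le a b : left_rank a < left_rank b -> Rle (l a) (l b).
Proof.
move=> lab; apply: Rnot_lt_le => hba.
have : left_before b a by apply/orP; left; apply/RltbP.
by move/left_rank_lt; rewrite ltnNge (ltnW lab).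
Qed.

Variable e : rel V.
Hypotheses (l_le_r : forall v, Rle (l v) (r v))
  (no_nesting : forall u v : V, u <> v ->
     ~ (Rle (l v) (l u) /\ Rle (r u) (r v) /\ (l u <> l v \/ r u <> r v)))
  (adj : forall u v : V, u <> v -> (e u v <-> (Rle (l u) (r v) /\ Rle (l v) (r u)))).

(* Without nesting, right endpoints are ordered like left ones; an interval
   meeting a later one then meets every interval in between. *)
Lemma left_rank_umbrella : umbrella e left_rank.
Proof.
move=> x y z lxy lyz exz.
have nxy : x <> y by move=> E; move: lxy; rewrite E ltnn.
have nyz : y <> z by move=> E; move: lyz; rewrite E ltnn.
have nxz : x <> z by move=> E; move: (ltn_trans lxy lyz); rewrite E ltnn.
have lx_ly := left_rank_left_le lxy; have ly_lz := left_rank_left_le lyz.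
have rx_ry : Rle (r x) (r y).
  apply: Rnot_lt_le => ryx; apply: (no_nesting (nesym nxy)).
  by split => //; split; [lra | right; lra].
have [lx_rz lz_rx] := (adj nxz).1 exz.
have := l_le_r x; have := l_le_r y; have := l_le_r z => lrz lry lrx.
by apply/andP; split; [apply/(adj nxy) | apply/(adj nyz)]; split; lra.
Qed.

End IntervalToUmbrella.

Theorem theorem1p8 (V : finType) (e : rel V)
    (e_sym : symmetric e) (e_irr : irreflexive e) :
  ind_complex_sortable e <-> proper_interval_graph e.
Proof.
split.
- case=> f [f_inj f_sortable].
  exact: umbrella_interval_model e_sym f_inj (sortable_umbrella e_sym e_irr f_sortable).
- case=> l [r [l_le_r [no_nesting adj]]].
  exists (left_rank l); split; first exact: left_rank_inj.
  exact: umbrella_sortable e_sym e_irr (@left_rank_inj _ l)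
    (left_rank_umbrella l_le_r no_nesting adj).
Qed.
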